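(* Let $(T,E)$ be the $3$-regular tree, $x\in T$ and $y$ a neighbor of $x$. Define functions $u_t:\mathbb Z\to\mathbb Z$ for $t\ge 0$ recursively: $u_0[0]=u_0[-1]=1$ and $u_0[s]=0$ for all other $s$; given $u_t$, first define $u_{t+1}[s]$ for odd $s$ by $$u_{t+1}[s]=\begin{cases}2u_t[s-1]-u_t[s]+u_t[s+1] & s<0,\\ u_t[s-1]-u_t[s]+2u_t[s+1] & s>0,\end{cases}$$ and then for even $s$ by $$u_{t+1}[s]=\begin{cases}2u_{t+1}[s-1]-u_t[s]+u_{t+1}[s+1] & s<0,\\ u_{t+1}[s-1]-u_t[s]+2u_{t+1}[s+1] & s\ge 0.\end{cases}$$ Then for every $t\ge 0$: for $s\ge 0$, $u_t[s]=r_{2t}(x,y)_z$ for every $z\in T_s(x,y)$, and for $s\le -1$, $u_t[s]=r_{2t}(x,y)_z$ for every $z\in T'_{-s}(x,y)$; moreover $$f_{4t-1}=\sum_{s\ge 1,\ s\text{ odd}}2^s u_t[s]+\sum_{s\ge 1,\ s \text{ odd}}2^{s-1}u_t[-s],\qquad f_{4t+1}=\sum_{s\ge 0,\ s\text{ even}}2^s u_t[s]+\sum_{s\ge 2,\ s\text{ even}}2^{s-1}u_t[-s].$$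
   Context: $(f_i)_{i\in\mathbb Z}$ are the Fibonacci numbers with $f_0=0$, $f_1=1$, $f_{i+1}=f_i+f_{i-1}$ for all $i\in\mathbb Z$. $(T,E)$ is the $3$-regular tree with graph distance $d$. $K_0(T)$ is the free abelian group with basis $\{s(z):z\in T\}$, elements written $a=\sum_z a_z s(z)$. For $v\in T$ the reflection $\sigma^v$ on $K_0(T)$ is $(\sigma^v a)_z=a_z$ for $z\ne v$, $(\sigma^v a)_v=-a_v+\sum_{\{w,v\}\in E}a_w$. $\Sigma^x$ is the composition of all $\sigma^v$ with $d(x,v)$ even and $\underline\Sigma^x$ the composition of all $\sigma^v$ with $d(x,v)$ odd. For neighbors $x,y$: $r_0(x,y)=s(x)+s(y)$, and $r_{t+1}(x,y)=\underline\Sigma^x r_t(x,y)$ for $t$ even, $r_{t+1}(x,y)=\Sigma^x r_t(x,y)$ for $t$ odd. $T_s(x,y)$ is the set of vertices $z$ with $d(x,z)=s$ such that the path from $x$ to $z$ does not pass through $y$; $T'_s(x,y)$ is the set of vertices $z$ with $d(x,z)=s$ whose path from $x$ passes through $y$. *)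

From HB Require Import structures.
From mathcomp Require Import all_boot all_order all_algebra.
From mathcomp Require Import boolp.
Set Implicit Arguments. Unset Strict Implicit. Unset Printing Implicit Defensive.
Import Order.TTheory GRing.Theory Num.Theory.
Local Open Scope ring_scope.

(* ---------- The 3-regular tree ----------
   Model: the Cayley graph of Z/2 * Z/2 * Z/2, i.e. vertices are reduced words
   over the alphabet 'I_3 (no two consecutive letters equal); the three
   neighbours of a word w are obtained by multiplying on the left by a letter c
   (cancelling if w starts with c). *)
Definition reducedw (w : seq 'I_3) : bool := sorted (fun a b => a != b) w.

Definition V := {w : seq 'I_3 | reducedw w}.

Definition nbw (c : 'I_3) (w : seq 'I_3) : seq 'I_3 :=
  if w is a :: w' then (if a == c then w' else c :: w) else [:: c].

Lemma nbw_reduced c w : reducedw w -> reducedw (nbw c w).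
Proof.
case: w => [//|a w] /= H; case: eqP => [_|/eqP ne]; first exact: path_sorted H.
by rewrite /reducedw /= eq_sym ne H.
Qed.

Definition nb (c : 'I_3) (v : V) : V := exist _ (nbw c (val v)) (nbw_reduced c (valP v)).

Definition adj : rel V := fun u v => [exists c : 'I_3, nb c u == v].

Definition dist_is (u v : V) (n : nat) : Prop :=
  (exists p : seq V, path adj u p /\ last u p = v /\ size p = n) /\
  (forall p : seq V, path adj u p -> last u p = v -> (n <= size p)%N).

Definition path_through (x y z : V) : Prop :=
  exists p : seq V, [/\ path adj x p, uniq (x :: p), last x p = z & y \in x :: p].

Definition inT (x y : V) (s : nat) (z : V) : Prop := dist_is x z s /\ ~ path_through x y z.
Definition inT' (x y : V) (s : nat) (z : V) : Prop := dist_is x z s /\ path_through x y z.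

(* ---------- K_0(T) and reflections ----------
   Elements of K_0(T) are represented as functions V -> int (coefficients a_z). *)
Definition K0 := V -> int.

Definition sigma (v : V) (a : K0) : K0 :=
  fun z => if z == v then - a v + \sum_(c < 3) a (nb c v) else a z.

(* Sigma^x : composition of all sigma^v with d(x,v) even (these pairwise
   commute, the v's being pairwise non-adjacent); it acts at each such v as sigma^v. *)
Definition Sigma (x : V) (a : K0) : K0 :=
  fun z => if `[< exists n, dist_is x z n /\ ~~ odd n >] then sigma z a z else a z.

Definition USigma (x : V) (a : K0) : K0 :=
  fun z => if `[< exists n, dist_is x z n /\ odd n >] then sigma z a z else a z.

Fixpoint r (t : nat) (x y : V) : K0 :=
  match t with
  | 0 => fun z => (z == x)%:R + (z == y)%:R
  | t'.+1 => if odd t' then Sigma x (r t' x y) else USigma x (r t' x y)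
  end.

Definition uodd (p : int -> int) (s : int) : int :=
  if s < 0 then 2 * p (s - 1) - p s + p (s + 1)
  else p (s - 1) - p s + 2 * p (s + 1).

Definition ueven (p q : int -> int) (s : int) : int :=
  if s < 0 then 2 * q (s - 1) - p s + q (s + 1)
  else q (s - 1) - p s + 2 * q (s + 1).

Fixpoint u (t : nat) : int -> int :=
  match t with
  | 0 => fun s => ((s == 0) || (s == -1))%:R
  | t'.+1 => let p := u t' in let q := uodd p in
             fun s => if odd `|s|%N then q s else ueven p q s
  end.

Fixpoint fibn (n : nat) : int :=
  match n with
  | 0 => 0
  | 1 => 1
  | (m.+1 as k).+1 => fibn k + fibn m
  end.

(* f_{-(n+1)} = (-1)^n f_{n+1}: the unique extension satisfying the recurrence *)
Definition fibZ (i : int) : int :=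
  match i with
  | Posz n => fibn n
  | Negz n => (-1) ^+ n * fibn n.+1
  end.

From HB Require Import structures.
From mathcomp Require Import all_boot all_order all_algebra.
From mathcomp Require Import boolp.
From mathcomp Require Import zify ring.
Set Implicit Arguments.
Unset Strict Implicit.
Unset Printing Implicit Defensive.

Import Order.TTheory GRing.Theory Num.Theory.
Local Open Scope ring_scope.

(* Let y = nb c x. Every vertex z has a signed distance s(z) to x: d(x, z),
   negated when the geodesic from x to z runs through y. A vertex at signed
   distance s >= 0 has one neighbour at s - 1 and two at s + 1, and a vertex at
   s < 0 two at s - 1 and one at s + 1; hence both families of reflections map
   a configuration f o s to g o s, with g obtained from f by the rules defining
   u, and r_(2t) = u_t o s follows from r_0 = u_0 o s.
   Pairing the terms at s and -s, the two Fibonacci sums O(u_t), E(u_t) obey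
   O(u_(t+1)) = 3 E(u_t) - O(u_t) and E(u_(t+1)) = 3 O(u_(t+1)) - E(u_t): the
   rules telescope, and u_t has finite support. This is the recursion
   f_(i+4) = 3 f_(i+2) - f_i. *)

Definition mulw (w v : seq 'I_3) : seq 'I_3 := foldr nbw v w.

Lemma nbwK c v : reducedw v -> nbw c (nbw c v) = v.
Proof.
case: v => [|a v] /=; first by rewrite eqxx.
case: (eqVneq a c) => [->|ne] H /=; last by rewrite eqxx.
by case: v H => [|b v] //= /andP [nb _]; rewrite eq_sym (negbTE nb).
Qed.

Lemma reducedw_mulw w v : reducedw v -> reducedw (mulw w v).
Proof. by elim: w => [|a w IH] //= /IH; apply: nbw_reduced. Qed.

Lemma mulw_nbw d w v : reducedw v -> mulw (nbw d w) v = nbw d (mulw w v).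
Proof.
move=> Hv; case: w => [|a w] //=.
by case: eqP => [->|_] //=; rewrite nbwK // reducedw_mulw.
Qed.

Lemma mulw_revK w v : reducedw v -> mulw (rev w) (mulw w v) = v.
Proof.
elim: w v => [|a w IH] v Hv //=.
by rewrite rev_cons /mulw foldr_rcons -/(mulw _ _) nbwK ?reducedw_mulw ?IH.
Qed.

Lemma mulw0 w : reducedw w -> mulw w [::] = w.
Proof.
elim: w => [|a w IH] //= H; rewrite IH; last exact: path_sorted H.
by case: w H {IH} => [|b w] //= /andP [nb _]; rewrite eq_sym (negbTE nb).
Qed.

Lemma mulwA a b c : reducedw b -> reducedw c ->
  mulw (mulw a b) c = mulw a (mulw b c).
Proof. by move=> Hb Hc; elim: a => [|a1 a IH] //=; rewrite mulw_nbw // IH. Qed.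

Lemma reducedw_rev w : reducedw w -> reducedw (rev w).
Proof. by rewrite /reducedw rev_sorted; apply: sub_sorted => a b; rewrite eq_sym. Qed.

(* The reduced word of z x^-1 in Z/2 * Z/2 * Z/2: the position of z seen from x. *)
Definition relw (x z : V) : seq 'I_3 := mulw (val z) (rev (val x)).

Lemma reducedw_relw x z : reducedw (relw x z).
Proof. exact/reducedw_mulw/reducedw_rev/valP. Qed.

Lemma relw_nb x d z : relw x (nb d z) = nbw d (relw x z).
Proof. exact/mulw_nbw/reducedw_rev/valP. Qed.

Lemma relw_id x : relw x x = [::].
Proof.
have := @mulw_revK (rev (val x)) [::] isT.
by rewrite revK mulw0 //; apply/reducedw_rev/valP.
Qed.

Lemma relw_inj x : injective (relw x).
Proof.
have relwK w : mulw (relw x w) (val x) = val w.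
  rewrite /relw mulwA; [|exact/reducedw_rev/valP|exact: valP].
  by rewrite -{2}(mulw0 (valP x)) mulw_revK ?mulw0 // valP.
by move=> z z' E; apply: val_inj; rewrite -relwK E relwK.
Qed.

Lemma nbK d : involutive (nb d).
Proof. by move=> z; apply: val_inj; rewrite /= nbwK // valP. Qed.

(* Signed length of a reduced word: negative for the words ending in c, i.e.
   for the vertices reached from x through its neighbour [nb c x]. *)
Definition level (c : 'I_3) (g : seq 'I_3) : int :=
  if last c g == c then - (size g)%:Z else (size g)%:Z.

Lemma level_eq0 c g : level c g = 0 -> g = [::].
Proof. by rewrite /level; case: g => [|a g] //=; case: ifP => _; lia. Qed.

Lemma level_nbw c d g : reducedw g ->
  level c (nbw d g) =
  if (d == head c g) == (level c g < 0) then level c g + 1 else level c g - 1.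
Proof.
have level_cons a g' : level c g' = if last a g' == c then - (size g')%:Z
                                     else (size g')%:Z.
  by rewrite /level; case: g' => [|b g'] //=; rewrite eqxx; case: (a == c).
case: g => [|a g] H; first by rewrite /level /= eqxx /=; case: (d == c) => /=; lia.
rewrite /= [level c (a :: g)]/level /=.
have E : level c (d :: a :: g) =
  if last a g == c then - (size g).+2%:Z else (size g).+2%:Z by [].
case: (eqVneq a d) => [->|ne];
  rewrite ?eqxx ?E ?(level_cons d g) ?(level_cons a g) ?(eq_sym d a) ?(negbTE ne);
  case: ifP => _ /=; lia.
Qed.

Lemma sum_level_nbw c g (f : int -> int) : reducedw g ->
  \sum_(d < 3) f (level c (nbw d g)) =
  if level c g < 0 then 2 * f (level c g - 1) + f (level c g + 1)
  else f (level c g - 1) + 2 * f (level c g + 1).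
Proof.
move=> H; rewrite (bigD1 (head c g)) //= level_nbw // eqxx.
rewrite (eq_bigr (fun _ => f (if level c g < 0 then level c g - 1 else level c g + 1)));
  last by move=> d /negbTE hd; rewrite level_nbw // hd; case: (level c g < 0).
rewrite sumr_const cardC1 card_ord /=.
by case: (level c g < 0) => /=; ring.
Qed.

Definition sdist (x : V) (c : 'I_3) (z : V) : int := level c (relw x z).

Section SignedDistance.
Variables (x : V) (c : 'I_3).

Lemma sdist_id : sdist x c x = 0.
Proof. by rewrite /sdist relw_id /level /= eqxx. Qed.

Lemma sdist_nbx : sdist x c (nb c x) = -1.
Proof. by rewrite /sdist relw_nb relw_id /level /= eqxx. Qed.

Lemma sdist_nb d z : sdist x c (nb d z) =
  if (d == head c (relw x z)) == (sdist x c z < 0) then sdist x c z + 1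
  else sdist x c z - 1.
Proof. by rewrite /sdist relw_nb level_nbw // reducedw_relw. Qed.

Lemma sdist_eq0 z : sdist x c z = 0 -> z = x.
Proof. by move/level_eq0 => H; apply: (@relw_inj x); rewrite H relw_id. Qed.

Lemma sdist_eqN1 z : sdist x c z = -1 -> z = nb c x.
Proof.
rewrite /sdist => H; apply: (@relw_inj x); rewrite relw_nb relw_id /=.
move: H; rewrite /level; case: (relw x z) => [|a [|b g]] /=; case: ifP => //; try lia.
by move/eqP => ->.
Qed.

Lemma sdist_adj u v : adj u v ->
  sdist x c v = sdist x c u + 1 \/ sdist x c v = sdist x c u - 1.
Proof. by case/existsP => d /eqP <-; rewrite sdist_nb; case: ifP; [left|right]. Qed.

Lemma sdist_path u p : path adj u p ->
  sdist x c (last u p) - sdist x c u <= (size p)%:Z /\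
  sdist x c u - sdist x c (last u p) <= (size p)%:Z.
Proof.
elim: p u => [|v p IH] u /=; first by move=> _; lia.
by case/andP => /sdist_adj H /IH; case: H => H; lia.
Qed.

Lemma path_sdist_cross u q : path adj u q ->
  sdist x c u < 0 -> 0 <= sdist x c (last u q) -> x \in q.
Proof.
elim: q u => [|v q IH] u /=; first by move=> _; lia.
case/andP => /sdist_adj Huv Hq Hu.
case: (ltrP (sdist x c v) 0) => Hv.
  by move=> H; rewrite in_cons (IH v Hq Hv H) orbT.
move=> _; have /sdist_eq0 -> : sdist x c v = 0 by case: Huv => ?; lia.
exact: mem_head.
Qed.

Lemma geodesic z : exists p, [/\ path adj x p, last x p = z &
  map (sdist x c) p =
  [seq (if sdist x c z < 0 then - i.+1%:Z else i.+1%:Z) | i <- iota 0 `|sdist x c z|]].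
Proof.
move Hz: `|sdist x c z|%N => n; elim: n z Hz => [|n IH] z Hz.
  have /sdist_eq0 -> : sdist x c z = 0 by lia.
  by exists [::]; rewrite sdist_id.
set d := head c (relw x z).
have Hw : sdist x c (nb d z) =
    if sdist x c z < 0 then sdist x c z + 1 else sdist x c z - 1.
  by rewrite sdist_nb eqxx; case: (sdist x c z < 0).
have Hn : `|sdist x c (nb d z)|%N = n by rewrite Hw; case: ifP; lia.
have [p [P1 P2 P3]] := IH _ Hn.
exists (rcons p z); split.
- by rewrite rcons_path P1 P2 /=; apply/existsP; exists d; rewrite nbK.
- by rewrite last_rcons.
have same_side : n != 0%N -> (sdist x c (nb d z) < 0) = (sdist x c z < 0).
  by rewrite Hw; case: ifP; lia.
rewrite map_rcons P3 -addn1 iotaD map_cat cats1 add0n.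
congr rcons; last by case: ifP; lia.
by case: (eqVneq n 0%N) => [->|/same_side ->].
Qed.

Lemma dist_isE z n : dist_is x z n <-> n = `|sdist x c z|%N.
Proof.
have [q [Q1 Q2 Q3]] := geodesic z.
have {}Q3 : size q = `|sdist x c z|%N.
  by rewrite -(size_map (sdist x c)) Q3 size_map size_iota.
have lower p : path adj x p -> last x p = z -> (`|sdist x c z| <= size p)%N.
  by move=> /sdist_path; rewrite sdist_id => + H; rewrite H; lia.
split=> [[[p [P1 [P2 P3]]] Hmin]|->]; last by split=> //; exists q.
by have := Hmin q Q1 Q2; have := lower p P1 P2; lia.
Qed.

Lemma path_throughE z : path_through x (nb c x) z <-> sdist x c z < 0.
Proof.
split=> [[p [P1 P2 P3 P4]]|Hz].
  case: (ltrP (sdist x c z) 0) => // Hz; exfalso.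
  have Hy : nb c x \in p.
    move: P4; rewrite in_cons => /orP [/eqP E|//].
    by have := sdist_nbx; rewrite E sdist_id => /eqP.
  case/splitPr: Hy P1 P2 P3 => p1 p2.
  rewrite cat_path last_cat /= => /andP [_ /andP [_ Hp2]] Hu Hl.
  have Hx : x \in p2 by apply: (path_sdist_cross Hp2); rewrite ?sdist_nbx ?Hl.
  by move: Hu; rewrite mem_cat in_cons Hx !orbT.
have [p [P1 P2 P3]] := geodesic z; rewrite Hz in P3.
exists p; split => //.
  apply: (@map_uniq _ _ (sdist x c)); rewrite /= sdist_id P3.
  rewrite map_inj_uniq ?iota_uniq ?andbT; last by move=> i j; lia.
  by apply/mapP => [[i _]]; lia.
have [n Hn] : exists n, `|sdist x c z|%N = n.+1 by exists `|sdist x c z|.-1; lia.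
move: P3; rewrite Hn; case: p {P1 P2} => [|a p] //= [Ha _].
by rewrite -(sdist_eqN1 Ha) !inE eqxx orbT.
Qed.

Lemma dist_parity z (P : pred nat) :
  `[< exists n, dist_is x z n /\ P n >] = P `|sdist x c z|%N.
Proof.
case: asboolP => [[n [/dist_isE <- //]]|H].
by apply/esym/negbTE/negP => HP; apply: H; exists `|sdist x c z|%N; rewrite dist_isE.
Qed.

End SignedDistance.

Lemma odd_absz_add1 (s : int) : odd `|s + 1| = ~~ odd `|s|.
Proof.
case: s => [n|[|n]] //; first by rewrite -PoszD absz_nat addn1.
by rewrite NegzE (_ : - n.+2%:Z + 1 = - n.+1%:Z) ?abszN ?absz_nat //; lia.
Qed.

Lemma odd_absz_sub1 (s : int) : odd `|s - 1| = ~~ odd `|s|.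
Proof. by rewrite -{2}(subrK 1 s) odd_absz_add1 negbK. Qed.

Definition odd_step (f : int -> int) (s : int) : int :=
  if odd `|s| then uodd f s else f s.

Definition even_step (f : int -> int) (s : int) : int :=
  if odd `|s| then f s else uodd f s.

Lemma u_succ t : u t.+1 = even_step (odd_step (u t)).
Proof.
apply/funext => s; rewrite /even_step /odd_step /=; case: ifP => // even_s.
by rewrite /uodd /ueven odd_absz_sub1 odd_absz_add1 even_s.
Qed.

Section Reflections.
Variables (x : V) (c : 'I_3).

(* [uodd f s] is [- f s] plus the sum of [f] over the three neighbours of a
   vertex at signed distance [s]. *)
Lemma sigma_sdist (f : int -> int) z :
  sigma z (f \o sdist x c) z = uodd f (sdist x c z).
Proof.
rewrite /sigma eqxx /=.
under eq_bigr => d _ do rewrite /sdist relw_nb.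
rewrite sum_level_nbw ?reducedw_relw // -/(sdist x c z) /uodd.
by case: ifP => _; ring.
Qed.

Lemma USigma_sdist (f : int -> int) :
  USigma x (f \o sdist x c) = odd_step f \o sdist x c.
Proof. by apply/funext => z; rewrite /USigma (dist_parity x c z odd) sigma_sdist. Qed.

Lemma Sigma_sdist (f : int -> int) :
  Sigma x (f \o sdist x c) = even_step f \o sdist x c.
Proof.
apply/funext => z; rewrite /Sigma (dist_parity x c z (fun n => ~~ odd n)).
by rewrite sigma_sdist /even_step /=; case: odd.
Qed.

End Reflections.

Lemma r_sdist x c t : r (2 * t) x (nb c x) = u t \o sdist x c.
Proof.
elim: t => [|t IH].
  have Nyx : (nb c x == x) = false.
    by apply/negbTE/eqP => E; have := sdist_nbx x c; rewrite E sdist_id.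
  have E0 z : (sdist x c z == 0) = (z == x).
    by apply/eqP/eqP => [/sdist_eq0|->] //; rewrite sdist_id.
  have E1 z : (sdist x c z == -1) = (z == nb c x).
    by apply/eqP/eqP => [/sdist_eqN1|->] //; rewrite sdist_nbx.
  apply/funext => z /=; rewrite E0 E1.
  by case: (eqVneq z x) => [->|_]; rewrite ?(eq_sym x) ?Nyx ?add0r ?addr0.
rewrite (_ : (2 * t.+1 = (2 * t).+2)%N); last lia.
by rewrite u_succ /= oddM /= IH USigma_sdist Sigma_sdist.
Qed.

(* [oddsum p n] and [evensum p n] are the two sums of the theorem, cut off
   after [2n + 1], resp. [2n + 2], with the terms at [s] and [- s] paired. *)
Definition wpair (p : int -> int) (s : nat) : int :=
  2 ^+ s * p s%:Z + 2 ^+ s.-1 * p (- s%:Z).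

Definition oddsum (p : int -> int) (n : nat) : int :=
  \sum_(0 <= k < n) wpair p k.*2.+1.

Definition evensum (p : int -> int) (n : nat) : int :=
  p 0 + \sum_(0 <= k < n) wpair p k.*2.+2.

Lemma oddsumS p n : oddsum p n.+1 = oddsum p n + wpair p n.*2.+1.
Proof. by rewrite /oddsum big_nat_recr. Qed.

Lemma evensumS p n : evensum p n.+1 = evensum p n + wpair p n.*2.+2.
Proof. by rewrite /evensum big_nat_recr //= addrA. Qed.

Lemma eq_oddsum p q n : (forall s, odd `|s| -> p s = q s) -> oddsum p n = oddsum q n.
Proof.
move=> Epq; apply: eq_bigr => k _.
by rewrite /wpair !Epq // ?abszN absz_nat /= odd_double.
Qed.

Lemma eq_evensum p q n :
  (forall s, ~~ odd `|s| -> p s = q s) -> evensum p n = evensum q n.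
Proof.
move=> Epq; rewrite /evensum Epq //; congr (_ + _); apply: eq_bigr => k _.
by rewrite /wpair !Epq // ?abszN absz_nat /= odd_double.
Qed.

Lemma uodd_posS p m : uodd p m.+1%:Z = p m%:Z - p m.+1%:Z + 2 * p m.+2%:Z.
Proof.
rewrite /uodd (_ : (m.+1%:Z < 0) = false); last by lia.
by rewrite (_ : m.+1%:Z - 1 = m%:Z) 1?(_ : m.+1%:Z + 1 = m.+2%:Z) //; lia.
Qed.

Lemma uodd_negS p m : uodd p (- m.+1%:Z) = 2 * p (- m.+2%:Z) - p (- m.+1%:Z) + p (- m%:Z).
Proof.
rewrite /uodd (_ : (- m.+1%:Z < 0) = true); last by lia.
by rewrite (_ : - m.+1%:Z - 1 = - m.+2%:Z) 1?(_ : - m.+1%:Z + 1 = - m%:Z) //; lia.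
Qed.

(* Both identities telescope; only the terms at the cut-off [n] survive. *)
Lemma oddsum_uodd p n : oddsum (uodd p) n =
  3 * evensum p n - oddsum p n - 2 ^+ n.*2 * (2 * p n.*2%:Z + p (- n.*2%:Z)).
Proof.
elim: n => [|n IH].
  by rewrite /oddsum /evensum !big_geq // oppr0 expr0; ring.
rewrite oddsumS evensumS oddsumS IH /wpair uodd_posS uodd_negS doubleS !exprS /=.
ring.
Qed.

Lemma evensum_uodd p n : evensum (uodd p) n =
  3 * oddsum p n - evensum p n + 2 ^+ n.*2 * (2 * p n.*2.+1%:Z + p (- n.*2.+1%:Z)).
Proof.
elim: n => [|n IH].
  rewrite /oddsum /evensum !big_geq // expr0 (_ : uodd p 0 = p (-1) - p 0 + 2 * p 1) //.
  ring.
rewrite evensumS evensumS oddsumS IH /wpair uodd_posS uodd_negS doubleS !exprS /=.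
ring.
Qed.

Definition vanishes_from (K : nat) (f : int -> int) : Prop :=
  forall s : int, (K <= `|s|)%N -> f s = 0.

Lemma uodd_vanishes K f : vanishes_from K f -> vanishes_from K.+1 (uodd f).
Proof. by move=> Hf s Hs; rewrite /uodd !Hf; try lia; case: ifP. Qed.

Lemma odd_step_vanishes K f : vanishes_from K f -> vanishes_from K.+1 (odd_step f).
Proof.
move=> Hf s Hs; rewrite /odd_step; case: ifP => _; first exact: uodd_vanishes Hf _ Hs.
by apply: Hf; lia.
Qed.

Lemma even_step_vanishes K f : vanishes_from K f -> vanishes_from K.+1 (even_step f).
Proof.
move=> Hf s Hs; rewrite /even_step; case: ifP => _; last exact: uodd_vanishes Hf _ Hs.
by apply: Hf; lia.
Qed.

Lemma u_vanishes t : vanishes_from (2 * t + 2) (u t).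
Proof.
elim: t => [|t IH] s Hs.
  by rewrite /=; case: eqP => [E|_]; [lia|case: eqP => [E|_]; [lia|]].
rewrite u_succ (_ : (2 * t.+1 + 2 = (2 * t + 2).+2)%N) in Hs *; last lia.
exact: even_step_vanishes (odd_step_vanishes IH) _ Hs.
Qed.

Lemma fibZ_add2 (i : int) : fibZ (i + 2) = fibZ (i + 1) + fibZ i.
Proof.
case: i => [n|[|[|n]]].
- by rewrite (_ : n%:Z + 2 = n.+2%:Z) 1?(_ : n%:Z + 1 = n.+1%:Z) //; lia.
- by [].
- by [].
- rewrite (_ : Negz n.+2 + 2 = Negz n) 1?(_ : Negz n.+2 + 1 = Negz n.+1); try lia.
  by rewrite /= !exprS; ring.
Qed.

Lemma fibZ_add4 (i : int) : fibZ (i + 4) = 3 * fibZ (i + 2) - fibZ i.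
Proof.
have := fibZ_add2 (i + 2); have := fibZ_add2 (i + 1); have := fibZ_add2 i.
rewrite -!addrA /= => -> -> ->; ring.
Qed.

Lemma sums_u t n : (t < n)%N ->
  oddsum (u t) n = fibZ (4 * t%:Z - 1) /\ evensum (u t) n = fibZ (4 * t%:Z + 1).
Proof.
elim: t n => [|t IH] n Hn.
  case: n Hn => // n _.
  have rest_eq0 (m : nat) : (2 <= m)%N -> wpair (u 0) m = 0.
    by move=> Hm; rewrite /wpair !u_vanishes ?abszN ?absz_nat // !mulr0 addr0.
  rewrite /oddsum /evensum !big_nat_recl // !big1 => [|k _|k _];
    try by apply: rest_eq0; rewrite doubleS.
  by rewrite (rest_eq0 2).
have [IHo IHe] := IH n (ltnW Hn).
have Eo : oddsum (u t.+1) n = oddsum (uodd (u t)) n.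
  by rewrite u_succ; apply: eq_oddsum => s odd_s; rewrite /even_step /odd_step odd_s.
have Ee : evensum (u t.+1) n = evensum (uodd (odd_step (u t))) n.
  by rewrite u_succ; apply: eq_evensum => s /negbTE even_s; rewrite /even_step even_s.
have Ho : oddsum (uodd (u t)) n = fibZ (4 * t.+1%:Z - 1).
  rewrite oddsum_uodd IHo IHe !u_vanishes ?abszN ?absz_nat; try lia.
  rewrite (_ : 4 * t.+1%:Z - 1 = 4 * t%:Z - 1 + 4) ?fibZ_add4; last lia.
  by rewrite (_ : 4 * t%:Z - 1 + 2 = 4 * t%:Z + 1); [ring | lia].
split; first by rewrite Eo.
have odd_step_vanishes_t := odd_step_vanishes (@u_vanishes t).
rewrite Ee evensum_uodd !odd_step_vanishes_t ?abszN ?absz_nat; try lia.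
rewrite (@eq_oddsum (odd_step (u t)) (uodd (u t))); last first.
  by move=> s odd_s; rewrite /odd_step odd_s.
rewrite (@eq_evensum (odd_step (u t)) (u t)); last first.
  by move=> s /negbTE even_s; rewrite /odd_step even_s.
rewrite Ho IHe (_ : 4 * t.+1%:Z + 1 = 4 * t%:Z + 1 + 4) ?fibZ_add4; last lia.
by rewrite (_ : 4 * t%:Z + 1 + 2 = 4 * t.+1%:Z - 1); [ring | lia].
Qed.

Section ParityReindexing.
Variables (R : Type) (idx : R) (op : Monoid.law idx) (F : nat -> R).

Lemma big_odd_half M :
  \big[op/idx]_(0 <= s < M | odd s) F s = \big[op/idx]_(0 <= k < M./2) F k.*2.+1.
Proof.
elim: M => [|M IH]; first by rewrite !big_geq.
rewrite big_mkcond big_nat_recr //= -big_mkcond IH uphalf_half.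
case: (boolP (odd M)) => odd_M /=; last by rewrite Monoid.mulm1.
by rewrite big_nat_recr //=; congr (op _ (F _)); rewrite -[LHS](odd_double_half M) odd_M.
Qed.

Lemma big_even_uphalf M :
  \big[op/idx]_(0 <= s < M | ~~ odd s) F s = \big[op/idx]_(0 <= k < uphalf M) F k.*2.
Proof.
elim: M => [|M IH]; first by rewrite !big_geq.
rewrite big_mkcond big_nat_recr //= -big_mkcond IH uphalf_half.
case: (boolP (odd M)) => odd_M /=; first by rewrite Monoid.mulm1.
by rewrite big_nat_recr //=; congr (op _ (F _)); rewrite -[LHS](odd_double_half M) (negbTE odd_M).
Qed.

End ParityReindexing.

Lemma odd_weighted_sums p M :
  \sum_(1 <= s < M | odd s) (2 ^+ s * p s%:Z)
  + \sum_(1 <= s < M | odd s) (2 ^+ (s - 1) * p (- s%:Z)) = oddsum p M./2.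
Proof.
case: M => [|M]; first by rewrite /oddsum !big_geq.
have from0 (G : nat -> int) : \sum_(0 <= s < M.+1 | odd s) G s =
    \sum_(1 <= s < M.+1 | odd s) G s by rewrite big_ltn_cond.
by rewrite -big_split /= -from0 big_odd_half; apply: eq_bigr => k _; rewrite subn1.
Qed.

Lemma even_weighted_sums p M : (2 <= M)%N ->
  \sum_(0 <= s < M | ~~ odd s) (2 ^+ s * p s%:Z)
  + \sum_(2 <= s < M | ~~ odd s) (2 ^+ (s - 1) * p (- s%:Z)) = evensum p (M.-1)./2.
Proof.
case: M => [//|M] HM.
have from0 (G : nat -> int) : \sum_(0 <= s < M.+1 | ~~ odd s) G s =
    \sum_(0 <= k < (M./2).+1) G k.*2.
  by rewrite big_even_uphalf.
have from2 (G : nat -> int) : \sum_(2 <= s < M.+1 | ~~ odd s) G s =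
    \sum_(0 <= k < M./2) G k.*2.+2.
  by have := from0 G; rewrite big_ltn_cond //= big_ltn_cond // big_nat_recl // => /addrI.
rewrite from0 from2 big_nat_recl //= /evensum expr0 mul1r -addrA -big_split.
by congr (_ + _); apply: eq_bigr => k _; rewrite subn1.
Qed.

Theorem mainTheorem2 (x y : V) (hxy : adj x y) (t : nat) :
  (forall (s : nat) (z : V), inT x y s z -> u t s%:Z = r (2 * t) x y z) /\
  (forall (s : nat) (z : V), (1 <= s)%N -> inT' x y s z -> u t (- s%:Z) = r (2 * t) x y z) /\
  (exists N : nat, forall M : nat, (N <= M)%N ->
     fibZ (4 * t%:Z - 1) =
       \sum_(1 <= s < M | odd s) (2 ^+ s * u t s%:Z)
     + \sum_(1 <= s < M | odd s) (2 ^+ (s - 1) * u t (- s%:Z))) /\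
  (exists N : nat, forall M : nat, (N <= M)%N ->
     fibZ (4 * t%:Z + 1) =
       \sum_(0 <= s < M | ~~ odd s) (2 ^+ s * u t s%:Z)
     + \sum_(2 <= s < M | ~~ odd s) (2 ^+ (s - 1) * u t (- s%:Z))).
Proof.
case/existsP: hxy => c /eqP <-; rewrite r_sdist.
split; last split; last split.
- move=> s z [/(dist_isE x c) -> not_through] /=.
  have : ~~ (sdist x c z < 0) by apply/negP => /(path_throughE x c).
  by rewrite -leNgt => ?; congr (u t _); lia.
- move=> s z _ [/(dist_isE x c) -> /(path_throughE x c) ?] /=.
  by congr (u t _); lia.
- exists (2 * t + 3)%N => M HM; rewrite odd_weighted_sums.
  by have [<- _] := @sums_u t M./2 ltac:(lia).
- exists (2 * t + 3)%N => M HM; rewrite even_weighted_sums; last lia.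
  by have [_ <-] := @sums_u t (M.-1)./2 ltac:(lia).
Qed.
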